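(* Let $p,p_1,\dots,p_n$ be distinct propositional variables ($n\geq 1$). Then $\bigwedge_{i=1}^n([0]p_i\to p_i)\to p\ \vdash_{\mathbf{GL}}\ Q^n(p)\leftrightarrow p$, i.e. the formula $Q^n(p)\leftrightarrow p$ is derivable from the axioms of $\mathbf{GL}$ and the hypothesis $\bigwedge_{i=1}^n([0]p_i\to p_i)\to p$ using modus ponens and necessitation.
   Context: $\mathbf{GL}$ is Gödel–Löb provability logic with the single modality $[0]$: classical tautologies, $[0](\phi\to\psi)\to([0]\phi\to[0]\psi)$, $[0]([0]\phi\to\phi)\to[0]\phi$, rules modus ponens and necessitation. For a finite set $\Gamma$, $\Gamma\vdash_{\mathbf{GL}}\phi$ means $\phi$ is derivable from the axioms and $\Gamma$ by modus ponens and necessitation (necessitation may be applied to anything derived, including hypotheses). Define $Q_1(p):=p$, $Q_{i+1}(p):=p\lor[0]Q_i(p)$, and $Q^n(p):=\bigwedge_{i=1}^n([0]Q_i(p)\to Q_i(p))$. *)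

From Stdlib Require Import List Arith.
Import ListNotations.

Inductive form : Type :=
| Bot : form
| Var : nat -> form
| Imp : form -> form -> form
| And : form -> form -> form
| Or  : form -> form -> form
| Box : form -> form.

Definition Top : form := Imp Bot Bot.
Definition Iff (a b : form) : form := And (Imp a b) (Imp b a).

(* Classical tautologies: formulas true under every boolean valuation in which
   variables and boxed formulas are treated as propositional atoms. *)
Fixpoint peval (v : form -> bool) (f : form) : bool :=
  match f with
  | Bot => false
  | Var n => v (Var n)
  | Imp a b => implb (peval v a) (peval v b)
  | And a b => andb (peval v a) (peval v b)
  | Or a b => orb (peval v a) (peval v b)
  | Box a => v (Box a)
  end.

Definition tautology (f : form) : Prop := forall v, peval v f = true.

(* Derivability in GL from a finite set of hypotheses Gamma, with modus ponens
   and necessitation (applicable to anything derived, hypotheses included). *)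
Inductive GLderiv (Gamma : list form) : form -> Prop :=
| d_taut : forall f, tautology f -> GLderiv Gamma f
| d_K : forall a b, GLderiv Gamma (Imp (Box (Imp a b)) (Imp (Box a) (Box b)))
| d_L : forall a, GLderiv Gamma (Imp (Box (Imp (Box a) a)) (Box a))
| d_hyp : forall f, In f Gamma -> GLderiv Gamma f
| d_mp : forall a b, GLderiv Gamma (Imp a b) -> GLderiv Gamma a -> GLderiv Gamma b
| d_nec : forall a, GLderiv Gamma a -> GLderiv Gamma (Box a).

Fixpoint bigAnd (l : list form) : form :=
  match l with
  | [] => Top
  | [a] => a
  | a :: l' => And a (bigAnd l')
  end.

(* Q_1(p) = p, Q_{i+1}(p) = p \/ [0] Q_i(p); Q 0 p := p is an unused default. *)
Fixpoint Q (i : nat) (p : form) : form :=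
  match i with
  | 0 => p
  | 1 => p
  | S k => Or p (Box (Q k p))
  end.

Definition Qn (n : nat) (p : form) : form :=
  bigAnd (map (fun i => Imp (Box (Q i p)) (Q i p)) (seq 1 n)).

From Stdlib Require Import Bool List Lia.
Import ListNotations.

(* Write ⊡q for q ∧ [0]q; ⊡q implies [0]⊡q, so ⊡-facts persist under the box.
   Induction on k: if ⊡ holds for all but k of the p_i, then Q_{k+1}(p).
   If [0]Q_k(p) fails, then for each remaining p_i the induction hypothesis
   under the box (with ⊡p_i added) refutes [0]p_i, so [0]p_i → p_i holds;
   thus all reflection instances hold and the hypothesis gives p.  For k = n
   this yields p ∨ [0]Q_n(p).  Conversely, Q^n(p) ∧ ¬p refutes [0]Q_1(p), ...,
   [0]Q_n(p) in turn, as [0]Q_{j+1} → Q_{j+1} = p ∨ [0]Q_j.  So Q^n(p) → p,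
   and p → Q^n(p) since p implies every Q_i(p). *)

Definition reflection (q : form) : form := Imp (Box q) q.
Definition sbox (q : form) : form := And q (Box q).

Lemma peval_bigAnd_nil v : peval v (bigAnd []) = true.
Proof. reflexivity. Qed.

Lemma peval_bigAnd_cons v z l :
  peval v (bigAnd (z :: l)) = peval v z && peval v (bigAnd l).
Proof. destruct l; simpl; [now rewrite andb_true_r | reflexivity]. Qed.

Ltac prove_tautology :=
  let v := fresh "v" in
  unfold Top, Iff, reflection, sbox; intro v;
  repeat progress (cbn [peval map]; rewrite ?peval_bigAnd_nil, ?peval_bigAnd_cons);
  repeat match goal with
         | |- context [peval v ?x] => destruct (peval v x)
         | |- context [v ?x] => destruct (v x)
         end; reflexivity.

Section Derivations.

Context {G : list form}.

Lemma taut_mp1 {a c} : GLderiv G a -> tautology (Imp a c) -> GLderiv G c.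
Proof. intros Ha T. eapply d_mp; [apply d_taut, T | exact Ha]. Qed.

Lemma taut_mp2 {a b c} :
  GLderiv G a -> GLderiv G b -> tautology (Imp a (Imp b c)) -> GLderiv G c.
Proof.
  intros Ha Hb T. eapply d_mp; [eapply taut_mp1; [exact Ha | exact T] | exact Hb].
Qed.

Lemma taut_mp3 {a b c d} : GLderiv G a -> GLderiv G b -> GLderiv G c ->
  tautology (Imp a (Imp b (Imp c d))) -> GLderiv G d.
Proof.
  intros Ha Hb Hc T.
  eapply d_mp; [eapply taut_mp2; [exact Ha | exact Hb | exact T] | exact Hc].
Qed.

Lemma box_mono {a b} : GLderiv G (Imp a b) -> GLderiv G (Imp (Box a) (Box b)).
Proof. intro H. eapply d_mp; [apply d_K | apply d_nec, H]. Qed.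

Lemma box_and a b : GLderiv G (Imp (Box a) (Imp (Box b) (Box (And a b)))).
Proof.
  assert (Hpair : GLderiv G (Imp (Box a) (Box (Imp b (And a b))))).
  { apply box_mono, d_taut. prove_tautology. }
  apply (taut_mp2 Hpair (d_K G b (And a b))). prove_tautology.
Qed.

(* Löb's axiom applied to ⊡a. *)
Lemma box_four a : GLderiv G (Imp (Box a) (Box (Box a))).
Proof.
  assert (Hfst : GLderiv G (Imp (Box (sbox a)) (Box a))).
  { apply box_mono, d_taut. prove_tautology. }
  assert (Hsnd : GLderiv G (Imp (Box (sbox a)) (Box (Box a)))).
  { apply box_mono, d_taut. prove_tautology. }
  assert (Hstep : GLderiv G (Imp a (Imp (Box (sbox a)) (sbox a)))).
  { apply (taut_mp1 Hfst). prove_tautology. }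
  apply (taut_mp3 (box_mono Hstep) (d_L G (sbox a)) Hsnd). prove_tautology.
Qed.

Lemma box_sbox a : GLderiv G (Imp (Box a) (Box (sbox a))).
Proof. apply (taut_mp2 (box_four a) (box_and a (Box a))). prove_tautology. Qed.

Lemma bigAnd_proj {l y} : In y l -> GLderiv G (Imp (bigAnd l) y).
Proof.
  induction l as [|z l IH]; intros Hy; [destruct Hy|].
  destruct Hy as [<- | Hy].
  - apply d_taut. prove_tautology.
  - apply (taut_mp1 (IH Hy)). prove_tautology.
Qed.

Lemma bigAnd_intro x l :
  (forall y, In y l -> GLderiv G (Imp x y)) -> GLderiv G (Imp x (bigAnd l)).
Proof.
  induction l as [|z l IH]; intros H.
  - apply d_taut. prove_tautology.
  - assert (Hz : GLderiv G (Imp x z)) by (apply H; now left).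
    assert (Hl : GLderiv G (Imp x (bigAnd l)))
      by (apply IH; intros y Hy; apply H; now right).
    apply (taut_mp2 Hz Hl). prove_tautology.
Qed.

Lemma bigAnd_box l :
  (forall y, In y l -> GLderiv G (Imp y (Box y))) ->
  GLderiv G (Imp (bigAnd l) (Box (bigAnd l))).
Proof.
  induction l as [|z l IH]; intros H.
  - cbn [bigAnd]. apply (taut_mp1 (d_nec G Top (d_taut G Top ltac:(prove_tautology)))).
    prove_tautology.
  - assert (Hl : GLderiv G (Imp (bigAnd l) (Box (bigAnd l))))
      by (apply IH; intros y Hy; apply H; now right).
    assert (Hz : GLderiv G (Imp z (Box z))) by (apply H; now left).
    assert (Hcons : GLderiv G (Imp (Box (And z (bigAnd l))) (Box (bigAnd (z :: l)))))
      by (apply box_mono, d_taut; prove_tautology).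
    assert (Hboth : GLderiv G (Imp (bigAnd (z :: l)) (Box (And z (bigAnd l)))))
      by (apply (taut_mp3 Hz Hl (box_and z (bigAnd l))); prove_tautology).
    apply (taut_mp2 Hboth Hcons). prove_tautology.
Qed.

Lemma box_sboxes_cons xs q :
  GLderiv G (Imp (bigAnd (map sbox xs))
                 (Imp (Box q) (Box (bigAnd (map sbox (q :: xs)))))).
Proof.
  assert (Hpersist : GLderiv G (Imp (bigAnd (map sbox xs)) (Box (bigAnd (map sbox xs))))).
  { apply bigAnd_box. intros y Hy. apply in_map_iff in Hy as [r [<- _]].
    apply (taut_mp1 (box_sbox r)). prove_tautology. }
  assert (Hcons : GLderiv G (Imp (Box (And (sbox q) (bigAnd (map sbox xs))))
                                 (Box (bigAnd (map sbox (q :: xs))))))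
    by (apply box_mono, d_taut; prove_tautology).
  assert (Hboth : GLderiv G (Imp (bigAnd (map sbox xs))
                                 (Imp (Box q) (Box (And (sbox q) (bigAnd (map sbox xs)))))))
    by (apply (taut_mp3 (box_sbox q) Hpersist (box_and (sbox q) (bigAnd (map sbox xs))));
        prove_tautology).
  apply (taut_mp2 Hboth Hcons). prove_tautology.
Qed.

End Derivations.

Section QnFormulas.

Variables (G : list form) (p : form).

Lemma imp_Q i : 1 <= i -> GLderiv G (Imp p (Q i p)).
Proof.
  intros Hi. destruct i as [|[|i]]; [lia | |]; apply d_taut; cbn [Q]; prove_tautology.
Qed.

Lemma imp_Qn n : GLderiv G (Imp p (Qn n p)).
Proof.
  apply bigAnd_intro. intros y Hy.
  apply in_map_iff in Hy as [j [<- Hj]]. apply in_seq in Hj.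
  apply (taut_mp1 (imp_Q j ltac:(lia))). prove_tautology.
Qed.

Lemma Qn_not_box_Q n j : 1 <= j <= n ->
  GLderiv G (Imp (Qn n p) (Imp (Imp p Bot) (Imp (Box (Q j p)) Bot))).
Proof.
  intros Hj.
  assert (Hrefl : forall i, 1 <= i <= n ->
                   GLderiv G (Imp (Qn n p) (Imp (Box (Q i p)) (Q i p)))).
  { intros i Hi. apply bigAnd_proj, in_map_iff. exists i. split; [reflexivity|].
    apply in_seq. lia. }
  destruct j as [|j]; [lia|].
  induction j as [|j IH].
  - apply (taut_mp1 (Hrefl 1 Hj)). cbn [Q]. prove_tautology.
  - apply (taut_mp2 (Hrefl (S (S j)) Hj) (IH ltac:(lia))). cbn [Q]. prove_tautology.
Qed.

Variable ps : list form.
Hypothesis reflection_hyp : GLderiv G (Imp (bigAnd (map reflection ps)) p).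

Lemma sboxes_imp_Q k : forall xs rest, length rest = k ->
  (forall q, In q ps -> In q xs \/ In q rest) ->
  GLderiv G (Imp (bigAnd (map sbox xs)) (Q (S k) p)).
Proof.
  induction k as [|k IH]; intros xs rest Hlen Hcover.
  - apply length_zero_iff_nil in Hlen as ->.
    assert (Hall : GLderiv G (Imp (bigAnd (map sbox xs)) (bigAnd (map reflection ps)))).
    { apply bigAnd_intro. intros y Hy. apply in_map_iff in Hy as [q [<- Hq]].
      destruct (Hcover q Hq) as [Hx | []].
      apply (taut_mp1 (bigAnd_proj (in_map sbox xs q Hx))). prove_tautology. }
    apply (taut_mp2 Hall reflection_hyp). cbn [Q]. prove_tautology.
  - assert (Hall : GLderiv G (Imp (And (bigAnd (map sbox xs)) (Imp (Box (Q (S k) p)) Bot))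
                                  (bigAnd (map reflection ps)))).
    { apply bigAnd_intro. intros y Hy. apply in_map_iff in Hy as [q [<- Hq]].
      destruct (Hcover q Hq) as [Hx | Hr].
      - apply (taut_mp1 (bigAnd_proj (in_map sbox xs q Hx))). prove_tautology.
      - apply in_split in Hr as [l1 [l2 ->]].
        assert (HIH : GLderiv G (Imp (bigAnd (map sbox (q :: xs))) (Q (S k) p))).
        { apply (IH _ (l1 ++ l2)).
          - rewrite length_app in *. simpl in Hlen. lia.
          - intros r Hr. specialize (Hcover r Hr).
            simpl. rewrite in_app_iff in *. simpl in Hcover. tauto. }
        apply (taut_mp2 (box_sboxes_cons xs q) (box_mono HIH)).
        prove_tautology. }
    apply (taut_mp2 Hall reflection_hyp). cbn [Q]. prove_tautology.
Qed.

Theorem Qn_iff_of_reflection_hyp n : length ps = n -> 1 <= n ->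
  GLderiv G (Iff (Qn n p) p).
Proof.
  intros Hlen Hn.
  assert (HQ : GLderiv G (Q (S n) p)).
  { apply (taut_mp1 (sboxes_imp_Q n [] ps Hlen (fun q Hq => or_intror Hq))).
    prove_tautology. }
  destruct n as [|m]; [lia|].
  change (Q (S (S m)) p) with (Or p (Box (Q (S m) p))) in HQ.
  apply (taut_mp3 HQ (Qn_not_box_Q (S m) (S m) ltac:(lia)) (imp_Qn (S m))).
  prove_tautology.
Qed.

End QnFormulas.

Theorem mainTheorem11 (n : nat) (a : nat) (b : nat -> nat)
  (hn : 1 <= n)
  (hb_inj : forall i j, 1 <= i <= n -> 1 <= j <= n -> b i = b j -> i = j)
  (ha : forall i, 1 <= i <= n -> b i <> a) :
  GLderiv
    [Imp (bigAnd (map (fun i => Imp (Box (Var (b i))) (Var (b i))) (seq 1 n))) (Var a)]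
    (Iff (Qn n (Var a)) (Var a)).
Proof.
  set (ps := map (fun i => Var (b i)) (seq 1 n)).
  replace (map _ (seq 1 n)) with (map reflection ps) by (unfold ps; now rewrite map_map).
  apply (Qn_iff_of_reflection_hyp _ _ ps); [apply d_hyp; now left | | exact hn].
  unfold ps. now rewrite length_map, length_seq.
Qed.
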